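(* Let $a>0$, $b\in\mathbb{R}$, and let $\mathcal{C}$ be an essential $f_{a,b}$-invariant circloid, with $L_1=\min_{z\in\mathcal{C}}\mathrm{pr}_2(z)$ and $L_2=\max_{z\in\mathcal{C}}\mathrm{pr}_2(z)$. Then $L_2-L_1\geq|b|$.
   Context: $\mathbb{A}=\mathbb{R}^2/\sim$ where $(x,y)\sim(x',y')$ iff $x-x'\in\mathbb{Z}$ and $y=y'$; $\mathrm{pr}_2$ the second coordinate. $f_{a,b}$ is the homeomorphism of $\mathbb{A}$ induced by $f_{a,b}(x,y)=\left(x+a\left[1-(y-b\sin(2\pi x))^2\right],\;y-b\sin(2\pi x)\right)$ (Non-Twist Standard Family). An annular continuum in $\mathbb{A}$ is a compact connected set $\mathcal{C}$ whose complement consists of exactly two disjoint essential open topological annuli, each a neighborhood of one of the two ends of $\mathbb{A}$. A circloid is an annular continuum not properly containing another annular continuum. *)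

From HB Require Import structures.
From mathcomp Require Import all_boot all_order all_algebra.
From mathcomp Require Import all_classical all_reals all_analysis.
Set Implicit Arguments. Unset Strict Implicit. Unset Printing Implicit Defensive.
Import Order.TTheory GRing.Theory Num.Theory.
Import numFieldNormedType.Exports.
Local Open Scope classical_set_scope.
Local Open Scope ring_scope.

Section Annulus.
Variable R : realType.

(* Model of the annulus A = R^2/~ as the cylinder S^1 x R embedded in R^3:
   the class of (x,y) is represented by ((cos 2 pi x, sin 2 pi x), y). *)
Definition pt := ((R * R) * R)%type.

Definition cyl (x y : R) : pt := ((cos (2 * pi * x), sin (2 * pi * x)), y).

Definition Ann : set pt := [set p | exists x y, p = cyl x y].

Definition pr2 (p : pt) : R := p.2.

Definition openA (U : set pt) : Prop :=
  U `<=` Ann /\ exists O : set pt, open O /\ U = Ann `&` O.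

Definition homeomorphic {T S : topologicalType} (A : set T) (B : set S) : Prop :=
  exists (f : T -> S) (g : S -> T),
    {within A, continuous f} /\ {within B, continuous g} /\
    (forall p, A p -> B (f p) /\ g (f p) = p) /\
    (forall q, B q -> A (g q) /\ f (g q) = q).

Definition unit_disk : set (R * R)%type :=
  [set p | p.1 ^+ 2 + p.2 ^+ 2 < 1].

Definition open_disk (D : set pt) : Prop := openA D /\ homeomorphic D unit_disk.

Definition open_annulus (U : set pt) : Prop :=
  openA U /\ connected U /\ homeomorphic U Ann.

Definition essential (U : set pt) : Prop :=
  ~ (exists D, open_disk D /\ U `<=` D).

Definition nbhd_upper_end (U : set pt) : Prop :=
  exists M : R, forall x y, M < y -> U (cyl x y).

Definition nbhd_lower_end (U : set pt) : Prop :=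
  exists M : R, forall x y, y < M -> U (cyl x y).

Definition annular_continuum (C : set pt) : Prop :=
  C `<=` Ann /\ compact C /\ connected C /\
  exists U V : set pt,
    Ann `\` C = U `|` V /\ U `&` V = set0 /\
    open_annulus U /\ open_annulus V /\ essential U /\ essential V /\
    nbhd_upper_end U /\ nbhd_lower_end V.

Definition circloid (C : set pt) : Prop :=
  annular_continuum C /\
  forall D, annular_continuum D -> D `<=` C -> D = C.

Definition essential_continuum (C : set pt) : Prop :=
  ~ (exists D, open_disk D /\ C `<=` D).

Definition Fab (a b x y : R) : R * R :=
  (x + a * (1 - (y - b * sin (2 * pi * x)) ^+ 2), y - b * sin (2 * pi * x)).

Definition fab_image (a b : R) (C : set pt) : set pt :=
  [set p | exists x y, C (cyl x y) /\ p = cyl (Fab a b x y).1 (Fab a b x y).2].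

Definition fab_invariant (a b : R) (C : set pt) : Prop := fab_image a b C = C.

Definition is_min_pr2 (C : set pt) (L : R) : Prop :=
  (exists p, C p /\ pr2 p = L) /\ (forall p, C p -> L <= pr2 p).

Definition is_max_pr2 (C : set pt) (L : R) : Prop :=
  (exists p, C p /\ pr2 p = L) /\ (forall p, C p -> pr2 p <= L).

End Annulus.

From mathcomp Require Import all_boot all_order all_algebra.
From mathcomp Require Import all_classical all_reals all_analysis.
From mathcomp Require Import ring lra.
Set Implicit Arguments. Unset Strict Implicit. Unset Printing Implicit Defensive.
Import Order.TTheory GRing.Theory Num.Theory.
Import numFieldNormedType.Exports.
Local Open Scope classical_set_scope.
Local Open Scope ring_scope.

(* An annular continuum separates the two ends of the annulus, so it meets
   every vertical line, in particular the line x = 1/4 on which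
   sin (2 pi x) = 1.  There f_{a,b} lowers the height by exactly b, so an
   invariant continuum contains two points at heights y and y - b, both in
   [L1, L2]. *)

Lemma continuous_pairl {T S : topologicalType} (c : T) :
  continuous (fun s : S => (c, s)).
Proof. by move=> s; apply: cvg_pair; [exact: cvg_cst | exact: cvg_id]. Qed.

Lemma connected_open_cover_preimage {S T : topologicalType} {g : S -> T}
    {O1 O2 : set T} :
  connected [set: S] -> continuous g -> open O1 -> open O2 ->
  (forall s, O1 (g s) \/ O2 (g s)) -> (forall s, ~ (O1 (g s) /\ O2 (g s))) ->
  (exists s, O1 (g s)) -> forall s, O1 (g s).
Proof.
move=> connS gc oO1 oO2 cover disj [s0 O1s0] s.
suff /seteqP[_ /(_ s I)] : g @^-1` O1 = setT by [].
apply: connS; first by exists s0.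
- exists (g @^-1` O1); last by rewrite setTI.
  by apply: open_comp => // t _; exact: gc.
- exists (~` (g @^-1` O2)); last first.
    rewrite setTI; apply/seteqP; split=> t /=.
    + by move=> O1t O2t; exact: (disj t).
    + by move=> nO2t; case: (cover t).
  by apply: open_closedC; apply: open_comp => // t _; exact: gc.
Qed.

Section AnnularContinuum.
Variable R : realType.
Implicit Types (C : set (pt R)) (x y : R).

Lemma annular_continuum_meets_vertical C :
  annular_continuum C -> forall x, exists y, C (cyl x y).
Proof.
move=> [_ [_ [_ [U [V [AnnC_UV [UV0 [[[_ [OU [oOU eU]]] _]
  [[[_ [OV [oOV eV]]] _] [_ [_ [[MU upperU] [MV lowerV]]]]]]]]]]]]] x.
rewrite {}eU {}eV in AnnC_UV UV0 upperU lowerV.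
apply: contrapT => Cmiss.
have cover y : OU (cyl x y) \/ OV (cyl x y).
  have : (@Ann R `\` C) (cyl x y).
    by split; [exists x, y | move=> Cy; apply: Cmiss; exists y].
  by rewrite AnnC_UV => -[[] _|[] _]; [left|right].
have disj y : ~ (OU (cyl x y) /\ OV (cyl x y)).
  move=> [OUy OVy]; have Ann_y : @Ann R (cyl x y) by exists x, y.
  by have : (@Ann R `&` OU `&` (@Ann R `&` OV)) (cyl x y) by []; rewrite UV0.
have connR : connected [set: R].
  by apply/connected_intervalP => ? ? _ _ ? _.
have cyl_cont : continuous (cyl x) by exact: continuous_pairl.
have allOU := connected_open_cover_preimage connR cyl_cont oOU oOV cover disj.
have [|_ OUhigh] := upperU x (MU + 1); first lra.
have [|_ OVlow] := lowerV x (MV - 1); first lra.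
apply: (disj (MV - 1)); split=> //.
by apply: allOU; exists (MU + 1).
Qed.

Lemma fab_invariant_height a b C x y :
  fab_invariant a b C -> C (cyl x y) ->
  exists x', C (cyl x' (y - b * sin (2 * pi * x))).
Proof.
move=> invC Cxy; rewrite -invC.
by exists (Fab a b x y).1, x, y; split.
Qed.

Lemma sin_2pi_quarter : sin (2 * pi * (1 / 4) : R) = 1.
Proof. have -> : 2 * pi * (1 / 4) = pi / 2 :> R by field. exact: sin_pihalf. Qed.

Lemma is_min_max_pr2_bounds C L1 L2 x y :
  is_min_pr2 C L1 -> is_max_pr2 C L2 -> C (cyl x y) -> L1 <= y <= L2.
Proof. by move=> [_ minC] [_ maxC] Cxy; rewrite (minC _ Cxy) (maxC _ Cxy). Qed.

End AnnularContinuum.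

Theorem mainTheorem12 (R : realType) (a b : R) (C : set (pt R)) (L1 L2 : R) :
  0 < a ->
  essential_continuum C -> circloid C -> fab_invariant a b C ->
  is_min_pr2 C L1 -> is_max_pr2 C L2 ->
  `|b| <= L2 - L1.
Proof.
move=> _ _ [annC _] invC minC maxC.
have [y Cy] := annular_continuum_meets_vertical annC (1 / 4).
have [x' Cb] := fab_invariant_height invC Cy.
rewrite sin_2pi_quarter mulr1 in Cb.
have /andP[y_ge y_le] := is_min_max_pr2_bounds minC maxC Cy.
have /andP[yb_ge yb_le] := is_min_max_pr2_bounds minC maxC Cb.
by rewrite ler_norml; apply/andP; split; lra.
Qed.
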